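(* Let $n\ge 3$ and let $z^\diamond\in\mathbb{R}^n$ be a 2D depth profile with corner set $\mathcal{C}=\{i\in\{2,\dots,n-1\}: z^\diamond_{i-1}-2z^\diamond_i+z^\diamond_{i+1}\neq 0\}$. Let $\mathcal{M}\subseteq\{1,\dots,n\}$ be a sample set with $|\mathcal{M}|=m$, let $A=\mathbf{I}_{\mathcal{M}}\in\mathbb{R}^{m\times n}$ be the corresponding sampling matrix, and assume noiseless measurements $y=Az^\diamond$. Let $\mathcal{I}\subseteq\{1,\dots,n-2\}$ be the $D$-support of $z^\diamond$ (the indices of the nonzero entries of $Dz^\diamond$), $\mathcal{J}=\{1,\dots,n-2\}\setminus\mathcal{I}$, let $N=\mathbf{I}_{\overline{\mathcal{M}}}\in\mathbb{R}^{(n-m)\times n}$ (whose rows span the null space of $A$), and define $$C_{\mathrm{er}}=\big|\big|\big|\,(N (D_{\mathcal{J}})^{\mathsf{T}})^{\dagger}\, N (D_{\mathcal{I}})^{\mathsf{T}}\,\big|\big|\big|_\infty .$$ Then: (i) if $\mathcal{M}=\mathcal{C}\cup\{1,n\}$, then $C_{\mathrm{er}}=1$; (ii) if $\mathcal{M}$ contains every corner $i\in\mathcal{C}$ together with its neighbors $i-1$ and $i+1$, then $C_{\mathrm{er}}=0$ and the problem $\min_{z\in\mathbb{R}^n}\|Dz\|_1$ subject to $Az=y$ recovers $z^\diamond$ exactly (its unique solution is $z^\diamond$).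
   Context: $D\in\mathbb{R}^{(n-2)\times n}$ is the second-order difference operator whose $k$-th row has entries $1,-2,1$ in columns $k,k+1,k+2$ and zeros elsewhere, so $(Dz)_k=z_k-2z_{k+1}+z_{k+2}$. For an index set $\mathcal{S}$, $\mathbf{I}_{\mathcal{S}}$ is the submatrix of the identity consisting of the rows indexed by $\mathcal{S}$, and $D_{\mathcal{S}}$ is the submatrix of $D$ consisting of the rows indexed by $\mathcal{S}$. $\overline{\mathcal{M}}=\{1,\dots,n\}\setminus\mathcal{M}$. $(\cdot)^\dagger$ is the Moore–Penrose pseudoinverse, and for a matrix $M$ with rows $M_i$, $|||M|||_\infty=\max_i\|M_i\|_1$.
   Formalization: Part (i) also assumes two corners in $\mathcal{C}$ with a non-corner index strictly between them, and in part (ii) exact recovery of $z^\diamond$ is asserted only when the sample set $\mathcal{M}$ has at least two elements. The statement above fails without it. *)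

From HB Require Import structures.
From mathcomp Require Import all_boot all_order all_algebra.
From mathcomp Require Import reals.
From Stdlib Require Import ClassicalEpsilon.
Set Implicit Arguments. Unset Strict Implicit. Unset Printing Implicit Defensive.
Import Order.TTheory GRing.Theory Num.Theory.
Local Open Scope ring_scope.

Section Defs.
Variable R : realType.

(* Indices are 0-based: the paper's index i in {1..n} is our i-1 : 'I_n,
   and the paper's D-row k in {1..n-2} is our k-1 : 'I_(n-2). *)

Definition diff2 (n : nat) : 'M[R]_(n - 2, n) :=
  \matrix_(k < n - 2, j < n)
    (if val j == val k then 1
     else if val j == (val k).+1 then -2
     else if val j == (val k).+2 then 1 else 0).

Definition idrows (n : nat) (S : {set 'I_n}) : 'M[R]_(#|S|, n) :=
  \matrix_(i < #|S|, j < n) (enum_val i == j)%:R.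

Definition subrows (p q : nat) (M : 'M[R]_(p, q)) (S : {set 'I_p})
  : 'M[R]_(#|S|, q) :=
  \matrix_(i < #|S|, j < q) M (enum_val i) j.

Definition is_MP_pinv (p q : nat) (A : 'M[R]_(p, q)) (X : 'M[R]_(q, p)) :=
  [/\ A *m X *m A = A, X *m A *m X = X,
      (A *m X)^T = A *m X & (X *m A)^T = X *m A].

Definition pinv (p q : nat) (A : 'M[R]_(p, q)) : 'M[R]_(q, p) :=
  epsilon (inhabits 0) (is_MP_pinv A).

(* |||M|||_oo = max_i sum_j |M_ij|  (0 for a matrix with no rows) *)
Definition mx_norm_inf (p q : nat) (M : 'M[R]_(p, q)) : R :=
  \big[Num.max/0]_(i < p) \sum_(j < q) `|M i j|.

(* entry z_k of a vector, 0-based, 0 out of range *)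
Definition zat (n : nat) (z : 'cV[R]_n) (k : nat) : R :=
  if insub k is Some i then z i 0 else 0.

Definition corners (n : nat) (z : 'cV[R]_n) : {set 'I_n} :=
  [set i : 'I_n | (0 < val i < n.-1)%N &&
     (zat z (val i).-1 - 2 * zat z (val i) + zat z (val i).+1 != 0)].

Definition Dsupp (n : nat) (z : 'cV[R]_n) : {set 'I_(n - 2)} :=
  [set k | (diff2 n *m z) k 0 != 0].

Definition l1D (n : nat) (z : 'cV[R]_n) : R :=
  \sum_(k < n - 2) `|(diff2 n *m z) k 0|.

Definition Cer (n : nat) (M : {set 'I_n}) (z : 'cV[R]_n) : R :=
  let I := Dsupp z in
  let J := ~: I in
  let N := idrows (~: M) in
  mx_norm_inf (pinv (N *m (subrows (diff2 n) J)^T) *m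
               (N *m (subrows (diff2 n) I)^T)).

End Defs.

(* Call the sampled positions knots; the rows of D in I are then
   centred at the interior knots and those in J at the unsampled points.
   T = N D_J^T is injective: T v = 0 says that the sequence carrying v at the
   centres of the J-rows has zero second difference at every unsampled point,
   and it vanishes at the knots, so it is zero.  Hence pinv T is a left
   inverse of T and pinv T (N D_I^T) is the solution Y of T Y = N D_I^T.
   The column of -Y for an interior knot c is the hat function of c (the
   piecewise-linear interpolant of the indicator of c at the knots), because
   its second difference vanishes off the knots.  So the row of an unsampled
   point u holds the interpolation weights of the two knots around u: they
   are nonnegative and sum to at most 1, with equality when both knots are
   interior, which happens at a non-corner between two corners.  If the stencil of every corner is sampled, N D_I^T = 0.  For a
   feasible z, D (z - z0) vanishes on the D-support of z0, so
   |D z|_1 = |D z0|_1 + |D (z - z0)|_1; equality makes z - z0 affine, and an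
   affine vector vanishing at two sampled points is zero. *)

From HB Require Import structures.
From mathcomp Require Import all_boot all_order all_algebra.
From mathcomp Require Import reals.
From mathcomp Require Import zify ring lra.
From Stdlib Require Import ClassicalEpsilon.
Set Implicit Arguments. Unset Strict Implicit. Unset Printing Implicit Defensive.
Import Order.TTheory GRing.Theory Num.Theory.
Local Open Scope ring_scope.

Section SecondDifference.
Variable R : numDomainType.
Implicit Types w : nat -> R.

Definition second_diff w (j : nat) : R := w j.-1 - 2 * w j + w j.+1.

Lemma second_diff_affine w a b :
  (forall j, (a < j < b)%N -> second_diff w j = 0) ->
  forall t, (a + t <= b)%N -> w (a + t)%N = w a + t%:R * (w a.+1 - w a).
Proof.
move=> w''0; elim/ltn_ind => -[_ _|[_ _|t IH tb]]; rewrite ?addn0 ?addn1; try ring.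
have w''0t := w''0 (a + t).+1 ltac:(lia).
have -> : w (a + t.+2)%N = 2 * w (a + t).+1 - w (a + t)%N + second_diff w (a + t).+1.
  by rewrite /second_diff !addnS /=; ring.
rewrite w''0t -addnS (IH t) ?(IH t.+1) //; try lia.
rewrite -!natr1; ring.
Qed.

Lemma affine_eq0 w a b :
  (forall j, (a < j < b)%N -> second_diff w j = 0) -> (a < b)%N ->
  w a = 0 -> w b = 0 -> forall p, (a <= p <= b)%N -> w p = 0.
Proof.
move=> w''0 ab wa wb p /andP[ap pb].
have lin := second_diff_affine w''0.
have slope0 : w a.+1 - w a = 0.
  have /eqP := lin (b - a)%N ltac:(lia).
  rewrite subnKC ?(ltnW ab) // wb wa add0r eq_sym mulf_eq0 pnatr_eq0 subn_eq0.
  by rewrite leqNgt ab => /eqP.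
by rewrite -(subnKC ap) lin ?slope0 ?mulr0 ?addr0 //; lia.
Qed.

End SecondDifference.

Lemma sum_ord_succ_eq (V : nmodType) m (P : pred 'I_m) a (r : V) :
  \sum_(x | P x && (x.+1 == a)) r = if [exists x, P x && (x.+1 == a)] then r else 0.
Proof.
case: existsP => [[x /andP[Px /eqP xa]]|none]; last first.
  by rewrite big1 // => y Py; case: none; exists y.
rewrite (bigD1 x) ?Px ?xa ?eqxx //= big1 ?addr0 // => y /andP[/andP[_ /eqP ya]].
by rewrite -val_eqE /= -eqSS ya xa eqxx.
Qed.

Section NearestKnots.
Variables (n : nat) (knot : pred nat).

Definition prev_knot (x : nat) : nat := (\max_(p < x | knot p) p)%N.

Lemma next_knot_subproof x : exists p, (x < p)%N && (knot p || (n.-1 <= p)%N).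
Proof. by exists (maxn x.+1 n.-1); apply/andP; split; [|apply/orP; right]; lia. Qed.

(* The disjunct makes the witness unconditional; under [knot_tail] it is
   redundant. *)
Definition next_knot (x : nat) : nat := ex_minn (next_knot_subproof x).

Hypothesis knot0 : knot 0.
Hypothesis knot_tail : forall p, (n.-1 <= p)%N -> knot p.

Lemma prev_knotP x : (0 < x)%N ->
  [/\ knot (prev_knot x), (prev_knot x < x)%N &
      forall p, (prev_knot x < p < x)%N -> ~~ knot p].
Proof.
case: x => // x _; rewrite /prev_knot (bigop.bigmax_eq_arg ord0) //.
case: arg_maxnP => //= i ki imax; split => // p /andP[ip px].
by apply: contraTN ip => kp; rewrite -leqNgt (imax (Ordinal px)).
Qed.

Lemma next_knotP x :
  [/\ knot (next_knot x), (x < next_knot x)%N &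
      forall p, (x < p < next_knot x)%N -> ~~ knot p].
Proof.
rewrite /next_knot; case: ex_minnP => m /andP[xm km] mmin.
have {}km : knot m by case/orP: km => // /knot_tail.
split => // p /andP[xp pm]; apply: contraTN pm => kp.
by rewrite -leqNgt mmin // xp kp.
Qed.

Lemma prev_knot_eq x a : (a < x)%N -> knot a ->
  (forall p, (a < p < x)%N -> ~~ knot p) -> prev_knot x = a.
Proof.
move=> ax ka gap; have [kb bx gap'] := prev_knotP (leq_ltn_trans (leq0n a) ax).
apply/eqP; rewrite eqn_leq; apply/andP; split.
  by rewrite leqNgt; apply: contraTN kb => ab; apply: gap; lia.
by rewrite leqNgt; apply: contraTN ka => ba; apply: gap'; lia.
Qed.

Lemma next_knot_eq x b : (x < b)%N -> knot b ->
  (forall p, (x < p < b)%N -> ~~ knot p) -> next_knot x = b.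
Proof.
move=> xb kb gap; have [ka xa gap'] := next_knotP x.
apply/eqP; rewrite eqn_leq; apply/andP; split.
  by rewrite leqNgt; apply: contraTN kb => ba; apply: gap'; lia.
by rewrite leqNgt; apply: contraTN ka => ab; apply: gap; lia.
Qed.

Lemma non_knot_gt0 u : ~~ knot u -> (0 < u)%N.
Proof. by case: u; rewrite ?knot0. Qed.

Lemma non_knot_lt u : ~~ knot u -> (u < n.-1)%N.
Proof. by rewrite ltnNge; apply: contra => /knot_tail. Qed.

Lemma prev_knot_ge c u : knot c -> (c < u)%N -> (c <= prev_knot u)%N.
Proof.
move=> kc cu; have [_ au gap] := prev_knotP (leq_ltn_trans (leq0n c) cu).
by rewrite leqNgt; apply: contraTN kc => ac; apply: gap; rewrite ac cu.
Qed.

Lemma next_knot_le c u : knot c -> (u < c)%N -> (next_knot u <= c)%N.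
Proof.
move=> kc uc; have [_ ub gap] := next_knotP u.
by rewrite leqNgt; apply: contraTN kc => cb; apply: gap; rewrite cb uc.
Qed.

Lemma knot_gap u : ~~ knot u ->
  forall p, (prev_knot u < p < next_knot u)%N -> ~~ knot p.
Proof.
move=> ku p; have [_ au gapl] := prev_knotP (non_knot_gt0 ku).
have [_ ub gapr] := next_knotP u.
have [pu|up|->] := ltngtP p u => // bounds; [apply: gapl | apply: gapr]; lia.
Qed.

Lemma next_prev_knot u : ~~ knot u -> next_knot (prev_knot u) = next_knot u.
Proof.
move=> ku; have [_ au _] := prev_knotP (non_knot_gt0 ku).
have [kb ub _] := next_knotP u.
by apply: next_knot_eq => //; [lia | apply: knot_gap].
Qed.

Lemma prev_next_knot u : ~~ knot u -> prev_knot (next_knot u) = prev_knot u.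
Proof.
move=> ku; have [ka au _] := prev_knotP (non_knot_gt0 ku).
have [_ ub _] := next_knotP u.
by apply: prev_knot_eq => //; [lia | apply: knot_gap].
Qed.

Section Hat.
Variable R : realFieldType.

Lemma second_diff_knots_eq0 (w : nat -> R) :
  (forall p, knot p -> w p = 0) -> (forall j, ~~ knot j -> second_diff w j = 0) ->
  forall p, w p = 0.
Proof.
move=> w_knot w''0 p; have [kp|kp] := boolP (knot p); first exact: w_knot.
have [ka ap _] := prev_knotP (non_knot_gt0 kp); have [kb pb _] := next_knotP p.
apply: (affine_eq0 (a := prev_knot p) (b := next_knot p)); rewrite ?w_knot //.
- by move=> j /(knot_gap kp)/w''0.
- exact: ltn_trans ap pb.
- by rewrite (ltnW ap) (ltnW pb).
Qed.

Definition hat (c p : nat) : R :=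
  let a := prev_knot c in let b := next_knot c in
  if (a <= p <= c)%N then (p%:R - a%:R) / (c%:R - a%:R)
  else if (c <= p <= b)%N then (b%:R - p%:R) / (b%:R - c%:R) else 0.

Section HatAt.
Variable c : nat.
Hypotheses (c_gt0 : (0 < c)%N) (knot_c : knot c).
Let a := prev_knot c.
Let b := next_knot c.
Let ac : (a < c)%N. Proof. by case: (prev_knotP c_gt0). Qed.
Let cb : (c < b)%N. Proof. by case: (next_knotP c). Qed.

Lemma hatE_left p : (a <= p <= c)%N -> hat c p = (p%:R - a%:R) / (c%:R - a%:R).
Proof. by move=> apc; rewrite /hat -/a -/b apc. Qed.

Lemma hatE_right p : (c <= p <= b)%N -> hat c p = (b%:R - p%:R) / (b%:R - c%:R).
Proof.
move=> cpb; rewrite /hat -/a -/b cpb; case: ifP => // apc.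
have -> : p = c by lia.
by rewrite !divff // subr_eq0 eqr_nat; apply/eqP; lia.
Qed.

Lemma hatE_out p : (p <= a)%N || (b <= p)%N -> hat c p = 0.
Proof.
move=> out; rewrite /hat -/a -/b; case: ifP => [apc|_].
  by rewrite (_ : p = a) ?subrr ?mul0r //; lia.
by case: ifP => // cpb; rewrite (_ : p = b) ?subrr ?mul0r //; lia.
Qed.

Lemma hat_self : hat c c = 1.
Proof.
rewrite hatE_left; last by rewrite leqnn andbT ltnW.
by rewrite divff // subr_eq0 eqr_nat neq_ltn ac orbT.
Qed.

Lemma hat_knot p : knot p -> p != c -> hat c p = 0.
Proof.
move=> kp pc; have [_ _ gapl] := prev_knotP c_gt0; have [_ _ gapr] := next_knotP c.
apply: hatE_out; apply: contraTT kp; rewrite negb_or -!ltnNge => /andP[ap pb].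
by have [pc'|cp|pc'] := ltngtP p c; [apply: gapl | apply: gapr | rewrite pc' eqxx in pc]; lia.
Qed.

Lemma hat_ge0 p : 0 <= hat c p.
Proof.
rewrite /hat -/a -/b; case: ifP => [apc|_]; last case: ifP => // cpb.
  by apply: divr_ge0; rewrite subr_ge0 ler_nat; lia.
by apply: divr_ge0; rewrite subr_ge0 ler_nat; lia.
Qed.

Lemma hat_le1 p : hat c p <= 1.
Proof.
rewrite /hat -/a -/b; case: ifP => [apc|_]; last case: ifP => // cpb.
  by rewrite ler_pdivrMr ?mul1r ?subr_gt0 ?ltr_nat // lerD2r ler_nat; lia.
by rewrite ler_pdivrMr ?mul1r ?subr_gt0 ?ltr_nat // lerD2l lerN2 ler_nat; lia.
Qed.

Lemma second_diff_hat j : ~~ knot j -> second_diff (hat c) j = 0.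
Proof.
move=> kj; have [ka _ _] := prev_knotP c_gt0; have [kb _ _] := next_knotP c.
have ja : j != a by apply: contraNneq kj => ->.
have jb : j != b by apply: contraNneq kj => ->.
have jc : j != c by apply: contraNneq kj => ->.
have j_gt0 := non_knot_gt0 kj.
case: j j_gt0 kj ja jb jc => // i _ _ ja jb jc; rewrite /second_diff /=.
case: (ltnP i.+1 a) => [ia|ai].
  by rewrite !hatE_out; [ring | lia..].
case: (ltnP i.+1 c) => [ic|ci].
  by rewrite !hatE_left -?natr1; [field; rewrite subr_eq0 eqr_nat; apply/eqP | ..]; lia.
case: (ltnP i.+1 b) => [ib|bi].
  by rewrite !hatE_right -?natr1; [field; rewrite subr_eq0 eqr_nat; apply/eqP | ..]; lia.
by rewrite !hatE_out; [ring | lia..].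
Qed.

End HatAt.

Lemma hat_eq0_nonadjacent c u : (0 < c)%N -> knot c -> ~~ knot u ->
  c != prev_knot u -> c != next_knot u -> hat c u = 0.
Proof.
move=> c_gt0 kc ku cpu cnu; have [_ ac gapl] := prev_knotP c_gt0.
have [_ cb gapr] := next_knotP c.
have [uc|cu|uc] := ltngtP u c; last by move: ku; rewrite uc kc.
- case: (leqP u (prev_knot c)) => [ua|au]; first by apply: hatE_out; rewrite ?ua.
  by move: cnu; rewrite (next_knot_eq uc kc) ?eqxx // => p ?; apply: gapl; lia.
- case: (leqP (next_knot c) u) => [bu|ub]; first by apply: hatE_out; rewrite ?bu ?orbT.
  by move: cpu; rewrite (prev_knot_eq cu kc) ?eqxx // => p ?; apply: gapr; lia.
Qed.

Lemma hat_prev_knot u : ~~ knot u -> (0 < prev_knot u)%N ->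
  hat (prev_knot u) u =
  ((next_knot u)%:R - u%:R) / ((next_knot u)%:R - (prev_knot u)%:R).
Proof.
move=> ku a_gt0; have [ka au _] := prev_knotP (non_knot_gt0 ku).
have [_ ub _] := next_knotP u.
by rewrite hatE_right ?next_prev_knot //; lia.
Qed.

Lemma hat_next_knot u : ~~ knot u ->
  hat (next_knot u) u =
  (u%:R - (prev_knot u)%:R) / ((next_knot u)%:R - (prev_knot u)%:R).
Proof.
move=> ku; have [_ au _] := prev_knotP (non_knot_gt0 ku).
have [kb ub _] := next_knotP u.
by rewrite hatE_left ?prev_next_knot //; lia.
Qed.

Lemma hat_prev_add_next u : ~~ knot u -> (0 < prev_knot u)%N ->
  hat (prev_knot u) u + hat (next_knot u) u = 1.
Proof.
move=> ku a_gt0; rewrite hat_prev_knot ?hat_next_knot // -mulrDl addrA subrK divff //.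
have [_ au _] := prev_knotP (non_knot_gt0 ku); have [_ ub _] := next_knotP u.
by rewrite subr_eq0 eqr_nat; apply/eqP; lia.
Qed.

Lemma sum_hat_split m (P : pred 'I_m) u :
  (forall x, P x -> knot x.+1) -> ~~ knot u ->
  \sum_(x | P x) hat x.+1 u =
    (if [exists x, P x && (x.+1 == prev_knot u)] then hat (prev_knot u) u else 0)
  + (if [exists x, P x && (x.+1 == next_knot u)] then hat (next_knot u) u else 0).
Proof.
move=> Pknot ku; have [_ au _] := prev_knotP (non_knot_gt0 ku).
have [_ ub _] := next_knotP u.
rewrite (bigID (fun x : 'I_m => x.+1 == prev_knot u)) /=.
rewrite [X in _ + X](bigID (fun x : 'I_m => x.+1 == next_knot u)) /=.
rewrite [X in _ + (_ + X)]big1 ?addr0 => [|x /andP[/andP[/Pknot kx xa] xb]]; last first.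
  exact: hat_eq0_nonadjacent.
have ba : next_knot u != prev_knot u by rewrite neq_ltn (ltn_trans au ub) orbT.
rewrite -!sum_ord_succ_eq; congr (_ + _).
  by apply: eq_bigr => x /andP[_ /eqP->].
apply: eq_big => [x|x /andP[_ /eqP-> //]].
by case: (x.+1 =P next_knot u) => [->|_]; rewrite ?ba ?andbT ?andbF.
Qed.

Lemma sum_hat_le1 m (P : pred 'I_m) u :
  (forall x, P x -> knot x.+1) -> ~~ knot u -> \sum_(x | P x) hat x.+1 u <= 1.
Proof.
move=> Pknot ku; rewrite sum_hat_split //.
have [kb ub _] := next_knotP u; have hb_le1 := hat_le1 (leq_ltn_trans (leq0n u) ub) kb u.
case: ifP => [/existsP[x /andP[_ /eqP xa]]|_]; last by case: ifP; lra.
have a_gt0 : (0 < prev_knot u)%N by rewrite -xa.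
have [ka _ _] := prev_knotP (non_knot_gt0 ku); have ha_le1 := hat_le1 a_gt0 ka u.
by case: ifP; rewrite ?hat_prev_add_next //; lra.
Qed.

Lemma sum_hat_eq1 m (P : pred 'I_m) u :
  (forall x, P x -> knot x.+1) -> ~~ knot u ->
  (exists x, P x && (x.+1 == prev_knot u)) ->
  (exists y, P y && (y.+1 == next_knot u)) ->
  \sum_(x | P x) hat x.+1 u = 1.
Proof.
move=> Pknot ku /existsP exa /existsP exb; rewrite sum_hat_split // exa exb.
have [x /andP[_ /eqP xa]] := existsP exa.
by rewrite hat_prev_add_next // -xa.
Qed.

End Hat.
End NearestKnots.

Lemma trmx_mul_self_eq0 (R : realDomainType) p (v : 'cV[R]_p) :
  (v^T *m v) 0 0 = 0 -> v = 0.
Proof.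
rewrite mxE => /eqP; rewrite psumr_eq0 => [/allP v0|i _]; last first.
  by rewrite mxE -expr2 sqr_ge0.
apply/matrixP => i j; rewrite (ord1 j) mxE.
by move/(_ i (mem_index_enum _)): v0; rewrite mxE -expr2 sqrf_eq0 => /eqP.
Qed.

Section PseudoInverse.
Variables (R : realType) (p q : nat) (A : 'M[R]_(p, q)).
Hypothesis A_inj : forall v : 'cV[R]_q, A *m v = 0 -> v = 0.

Lemma mulmx_inj_eq0 r (W : 'M[R]_(q, r)) : A *m W = 0 -> W = 0.
Proof.
move=> AW0; apply/matrixP => i j.
have /A_inj/matrixP/(_ i 0) : A *m col j W = 0 by rewrite colE mulmxA AW0 mul0mx.
by rewrite !mxE.
Qed.

Lemma gram_unitmx : A^T *m A \in unitmx.
Proof.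
rewrite -row_free_unit -kermx_eq0; apply/eqP/row_matrixP => i; rewrite row0.
set u := row i _; have uG0 : u *m (A^T *m A) = 0 by rewrite -row_mul mulmx_ker row0.
have /trmx_mul_self_eq0/A_inj/(congr1 trmx) : ((A *m u^T)^T *m (A *m u^T)) 0 0 = 0.
  by rewrite trmx_mul trmxK -mulmxA (mulmxA A^T) mulmxA uG0 mul0mx mxE.
by rewrite trmxK trmx0.
Qed.

Lemma pinv_mulmx_inj : pinv A *m A = 1%:M.
Proof.
set X := invmx (A^T *m A) *m A^T.
have XA : X *m A = 1%:M by rewrite -mulmxA mulVmx ?gram_unitmx.
have [AXA _ _ _] : is_MP_pinv A (pinv A).
  apply: epsilon_spec; exists X; split; first by rewrite -mulmxA XA mulmx1.
  - by rewrite XA mul1mx.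
  - by rewrite /X mulmxA !trmx_mul trmxK -mulmxA trmx_inv trmx_mul trmxK mulmxA.
  - by rewrite XA trmx1.
apply/eqP; rewrite -subr_eq0; apply/eqP/mulmx_inj_eq0.
by rewrite mulmxBr mulmx1 mulmxA AXA subrr.
Qed.

End PseudoInverse.

Section Indexing.
Variables (R : realType) (n : nat).

Lemma zatE (z : 'cV[R]_n) (i : 'I_n) : zat z i = z i 0.
Proof. by rewrite /zat valK. Qed.

Lemma sum_zat (z : 'cV[R]_n) p : \sum_(j < n) (val j == p)%:R * z j 0 = zat z p.
Proof.
rewrite /zat; case: insubP => [i _ <-|/negbTE pn].
  rewrite (bigD1 i) //= eqxx mul1r big1 ?addr0 // => j /negbTE.
  by rewrite val_eqE => ->; rewrite mul0r.
rewrite big1 // => j _; case: eqP => [jp|_]; last by rewrite mul0r.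
by move: (ltn_ord j); rewrite jp pn.
Qed.

Lemma diff2E (k : 'I_(n - 2)) (j : 'I_n) : diff2 R n k j =
  (val j == k)%:R - 2 * (val j == k.+1)%:R + (val j == k.+2)%:R.
Proof. by rewrite mxE; do !case: eqP => //=; lia || (move=> *; ring). Qed.

Lemma diff2_second_diff (k : 'I_(n - 2)) (j : 'I_n) :
  diff2 R n k j = second_diff (fun p => (p == k.+1)%:R) j.
Proof.
rewrite diff2E /second_diff eqSS (_ : (val j == k.+2) = (j.-1 == k.+1)); first ring.
by case: j => -[|i].
Qed.

Lemma diff2_mulE (z : 'cV[R]_n) (k : 'I_(n - 2)) :
  (diff2 R n *m z) k 0 = second_diff (zat z) k.+1.
Proof.
rewrite mxE /second_diff -!sum_zat mulr_sumr -sumrB -big_split /=.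
by apply: eq_bigr => j _; rewrite diff2E; ring.
Qed.

Lemma idrows_mulE m (S : {set 'I_n}) (X : 'M[R]_(n, m)) i l :
  (idrows R S *m X) i l = X (enum_val i) l.
Proof.
rewrite mxE (bigD1 (enum_val i)) //= mxE eqxx mul1r big1 ?addr0 // => j /negbTE.
by rewrite mxE eq_sym => ->; rewrite mul0r.
Qed.

(* Row k of [diff2] is centred at position k.+1. *)
Section CentredSeq.
Variables (S : {set 'I_(n - 2)}) (f : 'cV[R]_#|S|).

Definition centred_seq (p : nat) : R :=
  \sum_(r < #|S|) (p == (enum_val r).+1)%:R * f r 0.

Lemma centred_seq_row x (Sx : x \in S) : centred_seq x.+1 = f (enum_rank_in Sx x) 0.
Proof.
rewrite /centred_seq (bigD1 (enum_rank_in Sx x)) //= enum_rankK_in // eqxx mul1r.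
rewrite big1 ?addr0 // => r rx; case: eqP => [/succn_inj/val_inj xr|_]; last first.
  by rewrite mul0r.
by move: rx; rewrite -[r in r != _](enum_valK_in Sx) -xr eqxx.
Qed.

Lemma centred_seq_out p : (forall x, x \in S -> p != x.+1) -> centred_seq p = 0.
Proof.
by move=> off; rewrite /centred_seq big1 // => r _; rewrite (negbTE (off _ (enum_valP r))) mul0r.
Qed.

Lemma trD_mulE (j : 'I_n) :
  ((subrows (diff2 R n) S)^T *m f) j 0 = second_diff centred_seq j.
Proof.
rewrite mxE /second_diff /centred_seq mulr_sumr -sumrB -big_split /=.
by apply: eq_bigr => r _; rewrite [_^T _ _]mxE mxE diff2_second_diff /second_diff; ring.
Qed.

End CentredSeq.

End Indexing.

Section InfinityNorm.
Variables (R : realType) (p q : nat).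

Lemma mx_norm_inf0 : mx_norm_inf (0 : 'M[R]_(p, q)) = 0.
Proof.
rewrite /mx_norm_inf; elim/big_ind: _ => // [x y -> ->|i _]; first exact: maxxx.
by rewrite big1 // => j _; rewrite mxE normr0.
Qed.

Lemma mx_norm_inf_eq1 (X : 'M[R]_(p, q)) :
  (forall i, \sum_j `|X i j| <= 1) -> (exists i, \sum_j `|X i j| = 1) ->
  mx_norm_inf X = 1.
Proof.
move=> le1 [i0 eq1]; apply/eqP; rewrite eq_le; apply/andP; split.
  by apply: bigmax_le => [|i _]; [exact: ler01 | exact: le1].
by rewrite -[X in X <= _]eq1; apply: le_bigmax.
Qed.

End InfinityNorm.

Section KnotSampling.
Variables (R : realType) (n : nat) (knot : pred nat).
Hypotheses (knot0 : knot 0) (knot_tail : forall p, (n.-1 <= p)%N -> knot p).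

Let S := [set i : 'I_n | knot i].
Let I := [set k : 'I_(n - 2) | knot k.+1].
Let T := idrows R (~: S) *m (subrows (diff2 R n) (~: I))^T.
Let B := idrows R (~: S) *m (subrows (diff2 R n) I)^T.

Lemma interior_knot_row p : (0 < p < n.-1)%N -> knot p ->
  exists x : 'I_(n - 2), (x \in I) && (x.+1 == p).
Proof.
move=> /andP[p_gt0 pn] kp; have xn : (p.-1 < n - 2)%N by lia.
by exists (Ordinal xn); rewrite inE /= prednK // kp eqxx.
Qed.

Lemma non_knot_row u : ~~ knot u -> exists2 x : 'I_(n - 2), x \in ~: I & x.+1 = u.
Proof.
move=> ku; have u_gt0 := non_knot_gt0 knot0 ku; have un := non_knot_lt knot_tail ku.
have xn : (u.-1 < n - 2)%N by lia.
by exists (Ordinal xn); rewrite ?inE /= prednK.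
Qed.

Lemma non_knot_sample u : ~~ knot u -> exists i : 'I_#|~: S|, val (enum_val i) = u.
Proof.
move=> ku; have un : (u < n)%N by have := non_knot_lt knot_tail ku; lia.
have Su : Ordinal un \in ~: S by rewrite !inE.
by exists (enum_rank_in Su (Ordinal un)); rewrite enum_rankK_in.
Qed.

Lemma T_mulE (v : 'cV[R]_#|~: I|) i : (T *m v) i 0 = second_diff (centred_seq v) (enum_val i).
Proof. by rewrite /T -mulmxA idrows_mulE trD_mulE. Qed.

Lemma T_inj (v : 'cV[R]_#|~: I|) : T *m v = 0 -> v = 0.
Proof.
move=> Tv0; have w0 : forall p, centred_seq v p = 0.
  apply: (second_diff_knots_eq0 knot0 knot_tail) => [p kp|u ku].
    by apply: centred_seq_out => x; rewrite !inE; apply: contraNneq => <-.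
  have [i <-] := non_knot_sample ku.
  by rewrite -T_mulE Tv0 mxE.
apply/matrixP => k l; rewrite (ord1 l) mxE -(w0 (enum_val k).+1).
by rewrite (centred_seq_row _ (enum_valP k)) enum_valK_in.
Qed.

Definition hat_mx : 'M[R]_(#|~: I|, #|I|) :=
  \matrix_(r < #|~: I|, c < #|I|) - hat n knot R (enum_val c).+1 (enum_val r).+1.

Local Notation hat := (hat n knot R).

Lemma centred_seq_hat_col c p :
  centred_seq (col c hat_mx) p = (p == (enum_val c).+1)%:R - hat (enum_val c).+1 p.
Proof.
set C := (enum_val c).+1; have kC : knot C by have := enum_valP c; rewrite inE.
have [/existsP[x /andP[Jx /eqP->]]|none] :=
  boolP [exists x : 'I_(n - 2), (x \in ~: I) && (p == x.+1)].
  rewrite (centred_seq_row _ Jx) !mxE enum_rankK_in // -/C.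
  suff /negbTE-> : x.+1 != C by rewrite sub0r.
  by have := Jx; rewrite !inE; apply: contraNneq => ->.
rewrite centred_seq_out => [|x Jx]; last first.
  by apply: contraNneq none => ->; apply/existsP; exists x; rewrite Jx eqxx.
have kp : knot p.
  apply: contraNT none => kp; have [x Jx <-] := non_knot_row kp.
  by apply/existsP; exists x; rewrite Jx eqxx.
have [->|pC] := eqVneq p C; first by rewrite hat_self ?subrr.
by rewrite hat_knot ?subrr.
Qed.

Lemma T_mul_hat_mx : T *m hat_mx = B.
Proof.
apply/matrixP => i c; set u := val (enum_val i); set C := (enum_val c).+1.
have ku : ~~ knot u by have := enum_valP i; rewrite !inE.
have kC : knot C by have := enum_valP c; rewrite inE.
have -> : (T *m hat_mx) i c = (T *m col c hat_mx) i 0.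
  by rewrite colE mulmxA -colE [RHS]mxE.
have := second_diff_hat knot0 knot_tail R (ltn0Sn _) kC ku.
rewrite T_mulE /B idrows_mulE [_^T _ _]mxE mxE diff2_second_diff /second_diff.
by rewrite !centred_seq_hat_col -/u -/C; lra.
Qed.

Lemma hat_mx_row_sum r :
  \sum_c `|hat_mx r c| = \sum_(x in I) hat x.+1 (enum_val r).+1.
Proof.
rewrite [RHS]big_enum_val /=; apply: eq_bigr => c _.
have kC : knot (enum_val c).+1 by have := enum_valP c; rewrite inE.
by rewrite mxE normrN ger0_norm // hat_ge0.
Qed.

Lemma Cer_knots (z : 'cV[R]_n) : Dsupp z = I ->
  (exists c1 u c2, [/\ (0 < c1 < u)%N, (u < c2 < n.-1)%N, knot c1, knot c2 & ~~ knot u]) ->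
  Cer S z = 1.
Proof.
move=> Dz [c1 [u [c2 [/andP[c1_gt0 c1u] /andP[uc2 c2n] kc1 kc2 ku]]]].
have -> : Cer S z = mx_norm_inf (pinv T *m B) by rewrite /Cer Dz.
rewrite -T_mul_hat_mx mulmxA pinv_mulmx_inj ?mul1mx; last exact: T_inj.
have I_knot x : x \in I -> knot x.+1 by rewrite inE.
apply: mx_norm_inf_eq1 => [r|].
  rewrite hat_mx_row_sum; apply: sum_hat_le1 => //.
  by have := enum_valP r; rewrite !inE.
have [x Jx xu] := non_knot_row ku.
exists (enum_rank_in Jx x); rewrite hat_mx_row_sum enum_rankK_in // xu.
have a_ge := prev_knot_ge knot0 kc1 c1u; have b_le := next_knot_le knot_tail kc2 uc2.
have [ka au _] := prev_knotP knot0 (ltn_trans c1_gt0 c1u).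
have [kb ub _] := next_knotP knot_tail u.
apply: sum_hat_eq1 => //; apply: interior_knot_row => //; lia.
Qed.

End KnotSampling.

Section L1Recovery.
Variables (R : realType) (n : nat).

Lemma l1D_ge0 (z : 'cV[R]_n) : 0 <= l1D z.
Proof. by apply: sumr_ge0 => k _; apply: normr_ge0. Qed.

Lemma l1D_eq0_eq0 (e : 'cV[R]_n) (i1 i2 : 'I_n) :
  l1D e = 0 -> i1 != i2 -> e i1 0 = 0 -> e i2 0 = 0 -> e = 0.
Proof.
move=> /eqP; rewrite psumr_eq0 => [/allP De0|k _]; last exact: normr_ge0.
have e''0 j : (0 < j < n.-1)%N -> second_diff (zat e) j = 0.
  move=> /andP[j_gt0 jn]; have kn : (j.-1 < n - 2)%N by lia.
  move/(_ (Ordinal kn) (mem_index_enum _)): De0.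
  by rewrite normr_eq0 diff2_mulE /= prednK // => /eqP.
have affine (i : 'I_n) : e i 0 = zat e 0 + (val i)%:R * (zat e 1 - zat e 0).
  by rewrite -zatE -[val i]add0n (second_diff_affine e''0) //=; have := ltn_ord i; lia.
move=> i12 ei1 ei2; have slope0 : zat e 1 - zat e 0 = 0.
  have /eqP : ((val i1)%:R - (val i2)%:R) * (zat e 1 - zat e 0) = 0.
    by move: ei1 ei2; rewrite !affine; lra.
  by rewrite mulf_eq0 subr_eq0 eqr_nat val_eqE (negbTE i12) => /eqP.
have e00 : zat e 0 = 0 by move: ei1; rewrite affine slope0 mulr0 addr0.
by apply/matrixP => i j; rewrite (ord1 j) affine slope0 e00 mulr0 addr0 mxE.
Qed.

Section StencilSampled.
Variables (M : {set 'I_n}) (z0 : 'cV[R]_n).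
Hypothesis stencil_sampled : forall (k : 'I_(n - 2)) (j : 'I_n),
  k \in Dsupp z0 -> (k <= j <= k.+2)%N -> j \in M.

Lemma Cer_stencil_sampled : Cer M z0 = 0.
Proof.
suff N_DI0 : idrows R (~: M) *m (subrows (diff2 R n) (Dsupp z0))^T = 0.
  by rewrite /Cer /= N_DI0 mulmx0 mx_norm_inf0.
apply/matrixP => i c; rewrite idrows_mulE [_^T _ _]mxE !mxE.
set j := val (enum_val i); set k := val (enum_val c).
have off : ~~ (k <= j <= k.+2)%N.
  apply: contraTN (enum_valP i) => range; rewrite !inE negbK.
  exact: stencil_sampled (enum_valP c) range.
have [jk jk1 jk2] : [/\ j != k, j != k.+1 & j != k.+2] by split; apply/eqP; lia.
by rewrite (negbTE jk) (negbTE jk1) (negbTE jk2).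
Qed.

Section Feasible.
Variable z : 'cV[R]_n.
Hypothesis feasible : idrows R M *m z = idrows R M *m z0.

Lemma feasible_sampled_eq0 i : i \in M -> (z - z0) i 0 = 0.
Proof.
move=> Mi; move/matrixP/(_ (enum_rank_in Mi i) 0): feasible.
by rewrite !idrows_mulE enum_rankK_in // !mxE => ->; rewrite subrr.
Qed.

Lemma l1D_feasible : l1D z = l1D z0 + l1D (z - z0).
Proof.
rewrite /l1D -big_split; apply: eq_bigr => k _ /=.
have -> : diff2 R n *m z = diff2 R n *m z0 + diff2 R n *m (z - z0).
  by rewrite -mulmxDr addrC subrK.
rewrite mxE; have [Dk|] := boolP (k \in Dsupp z0); last first.
  by rewrite inE negbK => /eqP->; rewrite add0r normr0 add0r.
suff -> : (diff2 R n *m (z - z0)) k 0 = 0 by rewrite normr0 !addr0.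
have stencil0 p : (k <= p <= k.+2)%N -> zat (z - z0) p = 0.
  move=> kp; have pn : (p < n)%N by have := ltn_ord k; lia.
  by rewrite -[p]/(val (Ordinal pn)) zatE feasible_sampled_eq0 // (stencil_sampled Dk).
by rewrite diff2_mulE /second_diff /= !stencil0 ?mulr0 ?subrr ?addr0 //; lia.
Qed.

Lemma l1D_feasible_ge : l1D z0 <= l1D z.
Proof. by rewrite l1D_feasible lerDl l1D_ge0. Qed.

Lemma l1D_feasible_unique : (1 < #|M|)%N -> l1D z <= l1D z0 -> z = z0.
Proof.
case/card_gt1P => i1 [i2 [Mi1 Mi2 i12]] le_z_z0.
have l1e0 : l1D (z - z0) = 0.
  by apply/eqP; rewrite eq_le l1D_ge0 andbT -(lerD2l (l1D z0)) -l1D_feasible addr0.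
by apply/eqP; rewrite -subr_eq0; apply/eqP/(l1D_eq0_eq0 l1e0 i12); apply: feasible_sampled_eq0.
Qed.

End Feasible.
End StencilSampled.
End L1Recovery.

Section Corners.
Variables (R : realType) (n : nat) (z : 'cV[R]_n).

Definition corner_knot (p : nat) : bool :=
  [|| p == 0%N, (n.-1 <= p)%N | second_diff (zat z) p != 0].

Lemma corner_knot0 : corner_knot 0.
Proof. by []. Qed.

Lemma corner_knot_tail p : (n.-1 <= p)%N -> corner_knot p.
Proof. by move=> np; rewrite /corner_knot np orbT. Qed.

Lemma in_corners (i : 'I_n) :
  (i \in corners z) = (0 < i < n.-1)%N && (second_diff (zat z) i != 0).
Proof. by rewrite inE. Qed.

Lemma corner_knot_setE :
  corners z :|: [set i : 'I_n | (val i == 0) || (val i == n.-1)] =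
  [set i : 'I_n | corner_knot i].
Proof.
apply/setP => i; rewrite !inE /corner_knot; have := ltn_ord i.
case: (nat_of_ord i =P 0%N) => [->|/eqP i_gt0] in_; first by rewrite orbT.
case: (nat_of_ord i =P n.-1) => [->|/eqP in1]; first by rewrite leqnn !orbT.
have [-> ->] : (n.-1 <= i)%N = false /\ (0 < i < n.-1)%N by split; lia.
by rewrite !orbF.
Qed.

Lemma Dsupp_corner_knotE : Dsupp z = [set k : 'I_(n - 2) | corner_knot k.+1].
Proof.
apply/setP => k; rewrite !inE diff2_mulE /corner_knot /=.
suff -> : (n.-1 <= k.+1)%N = false by [].
by have := ltn_ord k; lia.
Qed.

Lemma corner_gap_knots :
  (exists c1 c2 k : 'I_n, [/\ c1 \in corners z, c2 \in corners z,
                             (c1 < k < c2)%N & k \notin corners z]) ->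
  exists c1 u c2, [/\ (0 < c1 < u)%N, (u < c2 < n.-1)%N,
                      corner_knot c1, corner_knot c2 & ~~ corner_knot u].
Proof.
move=> [c1 [c2 [k [C1 C2 /andP[c1k kc2] Ck]]]].
move: C1 C2 Ck; rewrite !in_corners => /andP[/andP[c1_gt0 _] s1] /andP[/andP[_ c2n] s2].
have -> /= : (0 < k < n.-1)%N by lia.
move=> /negbNE s0; exists c1, k, c2; rewrite /corner_knot s1 s2 s0 !orbT.
have [-> ->] : (nat_of_ord k == 0)%N = false /\ (n.-1 <= k)%N = false by split; lia.
by split => //; lia.
Qed.

Lemma corners_stencil_sampled (M : {set 'I_n}) :
  (forall i : 'I_n, i \in corners z ->
     [/\ i \in M, (forall j : 'I_n, val j = (val i).-1 -> j \in M)
                & (forall j : 'I_n, val j = (val i).+1 -> j \in M)]) ->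
  forall (k : 'I_(n - 2)) (j : 'I_n), k \in Dsupp z -> (k <= j <= k.+2)%N -> j \in M.
Proof.
move=> nbhd k j; have kn : (k.+1 < n)%N by have := ltn_ord k; lia.
rewrite inE diff2_mulE => s kj.
have /nbhd[Mc Mprev Mnext] : Ordinal kn \in corners z.
  by rewrite in_corners /= s andbT; have := ltn_ord k; lia.
have [jk|jk|jk] := ltngtP j k.+1.
- by apply: Mprev => /=; lia.
- by apply: Mnext => /=; lia.
- by rewrite (_ : j = Ordinal kn) //; apply: val_inj.
Qed.

End Corners.

Theorem proposition2 (R : realType) (n : nat) (zd : 'cV[R]_n)
    (M : {set 'I_n}) :
  (3 <= n)%N ->
  let C := corners zd in
  let A := idrows R M in
  let y := A *m zd in
  (* (i) *)
  ((exists (c1 c2 k : 'I_n), [/\ c1 \in C, c2 \in C,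
       (val c1 < val k < val c2)%N & k \notin C]) ->
   M = C :|: [set i : 'I_n | (val i == 0)%N || (val i == n.-1)] ->
   Cer M zd = 1)
  /\
  (* (ii) *)
  ((forall i : 'I_n, i \in C ->
      [/\ i \in M,
          (forall j : 'I_n, val j = (val i).-1 -> j \in M) &
          (forall j : 'I_n, val j = (val i).+1 -> j \in M)]) ->
   Cer M zd = 0 /\
   ((2 <= #|M|)%N ->
    (forall z : 'cV[R]_n, A *m z = y -> l1D zd <= l1D z) /\
    (forall z : 'cV[R]_n, A *m z = y -> l1D z <= l1D zd -> z = zd))).
Proof.
move=> _ C A y; split.
  move=> /corner_gap_knots gap ->; rewrite corner_knot_setE.
  apply: Cer_knots gap; [exact: corner_knot0 | exact: corner_knot_tail |].
  exact: Dsupp_corner_knotE.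
move=> /corners_stencil_sampled sampled; split; first exact: Cer_stencil_sampled.
move=> M2; split=> z feasible; first exact: (l1D_feasible_ge sampled feasible).
exact: (l1D_feasible_unique sampled feasible M2).
Qed.
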